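(* Let $\Gamma$ be a finite connected $(G,2)$-distance-transitive graph of valency $k\ge2$, and suppose $\gcd(c_2,k-1)=1$. Then either $\Gamma$ has girth $3$ or $\Gamma$ is $(G,2)$-arc-transitive.
   Context: For $G\le\mathrm{Aut}(\Gamma)$, $\Gamma$ is $(G,2)$-distance-transitive if its diameter is at least $2$, $G$ is vertex-transitive and $G_u$ is transitive on $\Gamma(u)$ and $\Gamma_2(u)$ for each $u$. $c_2$ is the number of common neighbours of two vertices at distance $2$. $\Gamma$ is $(G,2)$-arc-transitive if $G$ is transitive on vertices and on $2$-arcs (triples $(u_0,u_1,u_2)$ with $u_0\sim u_1\sim u_2$, $u_0\ne u_2$). *)

From mathcomp Require Import all_boot all_order all_fingroup.
Set Implicit Arguments. Unset Strict Implicit. Unset Printing Implicit Defensive.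
Open Scope group_scope.

Definition simple_graph (V : finType) (e : rel V) : Prop :=
  symmetric e /\ irreflexive e.

Definition connected_graph (V : finType) (e : rel V) : Prop :=
  forall u v, connect e u v.

Definition nbhd (V : finType) (e : rel V) (u : V) : {set V} := [set w | e u w].

Definition nbhd2 (V : finType) (e : rel V) (u : V) : {set V} :=
  [set w | [&& w != u, ~~ e u w & [exists x, e u x && e x w]]].

Definition regular (V : finType) (e : rel V) (k : nat) : Prop :=
  forall u, #|nbhd e u| = k.

Definition diam_ge2 (V : finType) (e : rel V) : Prop :=
  exists u v : V, u != v /\ ~~ e u v.

Definition automorphisms (V : finType) (e : rel V) (G : {group {perm V}}) : Prop :=
  forall g, g \in G -> forall x y, e (g x) (g y) = e x y.

Definition vertex_transitive (V : finType) (G : {group {perm V}}) : Prop :=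
  forall u v : V, exists2 g, g \in G & g u = v.

Definition stab_transitive_on (V : finType) (G : {group {perm V}}) (u : V)
    (S : {set V}) : Prop :=
  forall v w, v \in S -> w \in S -> exists2 g, g \in G & (g u = u /\ g v = w).

Definition G2_distance_transitive (V : finType) (e : rel V)
    (G : {group {perm V}}) : Prop :=
  [/\ automorphisms e G, diam_ge2 e, vertex_transitive G &
      forall u, stab_transitive_on G u (nbhd e u) /\
                stab_transitive_on G u (nbhd2 e u)].

Definition has_c2 (V : finType) (e : rel V) (c2 : nat) : Prop :=
  forall u w, w \in nbhd2 e u -> #|nbhd e u :&: nbhd e w| = c2.

Definition two_arc (V : finType) (e : rel V) (a : V * V * V) : bool :=
  [&& e a.1.1 a.1.2, e a.1.2 a.2 & a.1.1 != a.2].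

Definition G2_arc_transitive (V : finType) (e : rel V)
    (G : {group {perm V}}) : Prop :=
  vertex_transitive G /\
  forall a b, two_arc e a -> two_arc e b ->
    exists2 g, g \in G &
      [/\ g a.1.1 = b.1.1, g a.1.2 = b.1.2 & g a.2 = b.2].

(* girth 3: the graph contains a 3-cycle (triangle); since a simple graph
   has no cycles of length < 3, girth = 3 iff a triangle exists. *)
Definition girth3 (V : finType) (e : rel V) : Prop :=
  exists x y z : V, [&& e x y, e y z & e z x].

From mathcomp Require Import all_boot all_order all_fingroup.
Set Implicit Arguments. Unset Strict Implicit. Unset Printing Implicit Defensive.
Local Open Scope nat_scope.

(* Count the 2-arcs (u, v, w) starting at a fixed vertex u.  Without
   triangles w lies in Gamma_2(u), so there are k (k - 1) = |Gamma_2(u)| c2 of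
   them.  Let O be an orbit of the stabiliser G_u on these 2-arcs.  Since G_u
   is transitive on Gamma(u) and on Gamma_2(u), O has m elements over each v
   and n over each w, whence k m = |Gamma_2(u)| n and therefore
   m c2 = n (k - 1).  As c2 and k - 1 are coprime, k - 1 divides m <= k - 1,
   so O contains every 2-arc (u, v, w) for its given v, and then, by
   transitivity on Gamma(u), every 2-arc starting at u.  With vertex
   transitivity this is 2-arc transitivity. *)

Lemma card_uniform_fibres (T R : finType) (A : {set T}) (B : {set R})
    (f : T -> R) c :
  {in A, forall x, f x \in B} ->
  {in B, forall y, #|[set x in A | f x == y]| = c} ->
  #|A| = #|B| * c.
Proof.
move=> fAB fibre_c; rewrite -sum1_card (partition_big f (mem B)) //=.
rewrite -sum_nat_const; apply: eq_bigr => y By.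
by rewrite -(fibre_c y By) sum1_card; apply: eq_card => x; rewrite inE.
Qed.

Section EquivariantFibres.

Variables (aT : finGroupType) (T R : finType).
Variables (to : {action aT &-> T}) (toR : {action aT &-> R}) (f : T -> R).
Hypothesis f_equivariant : forall x a, f (to x a) = toR (f x) a.
Variables (H : {group aT}) (A : {set T}).
Hypothesis actsA : [acts H, on A | to].

Local Notation fibre y := [set x in A | f x == y].

Lemma card_fibre_orbit y z : z \in orbit toR H y -> #|fibre z| = #|fibre y|.
Proof.
suff le_fibre y1 y2 : y2 \in orbit toR H y1 -> #|fibre y1| <= #|fibre y2|.
  by move=> zHy; apply/eqP; rewrite eqn_leq !le_fibre // orbit_sym.
case/orbitP=> a Ha <-; rewrite -(card_imset _ (act_inj to a)).
apply/subset_leq_card/subsetP=> _ /imsetP[x /setIdP[Ax /eqP <-] ->].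
by rewrite inE f_equivariant eqxx (acts_act actsA) ?Ax.
Qed.

Lemma card_acts_uniform_fibres (B : {set R}) y :
  {in A, forall x, f x \in B} -> {in B &, forall y1 y2, y2 \in orbit toR H y1} ->
  y \in B -> #|A| = #|B| * #|fibre y|.
Proof.
move=> fAB transB By; apply: card_uniform_fibres fAB _ => z Bz.
exact/card_fibre_orbit/transB.
Qed.

End EquivariantFibres.

Section PairAction.

Variable V : finType.

Definition pair_act (p : V * V) (g : {perm V}) := (g p.1, g p.2).

Lemma pair_act1 : pair_act^~ 1%g =1 id.
Proof. by case=> x y; rewrite /pair_act !perm1. Qed.

Lemma pair_actM p : act_morph pair_act p.
Proof. by move=> g h; rewrite /pair_act !permM. Qed.

Canonical pair_action := TotalAction pair_act1 pair_actM.

End PairAction.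

Arguments pair_action {V}.

Lemma girth3P (V : finType) (e : rel V) :
  reflect (girth3 e) [exists x, exists y, exists z, [&& e x y, e y z & e z x]].
Proof.
apply: (iffP existsP) => [[x /existsP[y /existsP[z xyz]]] | [x [y [z xyz]]]].
  by exists x, y, z.
by exists x; apply/existsP; exists y; apply/existsP; exists z.
Qed.

Section TwoArcs.

Variables (V : finType) (e : rel V) (G : {group {perm V}}) (k c2 : nat).
Hypotheses (e_sym : symmetric e) (autG : automorphisms e G).

Definition two_arcs_from (u : V) : {set V * V} :=
  [set p | [&& e u p.1, e p.1 p.2 & p.2 != u]].

Lemma two_arcs_from_act g u p :
  g \in G -> (pair_act p g \in two_arcs_from (g u)) = (p \in two_arcs_from u).
Proof. by move=> Gg; rewrite !inE /= !autG // (inj_eq perm_inj). Qed.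

Lemma acts_stab_two_arcs_from u :
  [acts 'C_G[u | 'P], on two_arcs_from u | pair_action].
Proof.
apply/subsetP => g /setIP[Gg /astab1P /= gu]; apply/astabsP => p.
by rewrite -{1}gu two_arcs_from_act.
Qed.

Lemma stab_transitive_orbit u S :
  stab_transitive_on G u S -> {in S &, forall v w, w \in orbit 'P 'C_G[u | 'P] v}.
Proof.
move=> transS v w Sv Sw; have [g Gg [gu gv]] := transS v w Sv Sw.
by apply/orbitP; exists g; rewrite // inE Gg; apply/astab1P.
Qed.

Lemma two_arc_start_nbhd u p : p \in two_arcs_from u -> p.1 \in nbhd e u.
Proof. by rewrite !inE => /andP[]. Qed.

Hypothesis no_triangle : ~ girth3 e.

Lemma two_arc_end_nbhd2 u p : p \in two_arcs_from u -> p.2 \in nbhd2 e u.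
Proof.
rewrite !inE => /and3P[up1 p12 p2u]; rewrite p2u /=.
apply/andP; split; last by apply/existsP; exists p.1; rewrite up1.
apply/negP=> up2; case: no_triangle.
by exists u, p.1, p.2; rewrite up1 p12 e_sym.
Qed.

Hypothesis e_regular : regular e k.

Lemma card_two_arcs_fibre_start u v :
  v \in nbhd e u -> #|[set p in two_arcs_from u | p.1 == v]| = k - 1.
Proof.
rewrite inE => uv.
have -> : [set p in two_arcs_from u | p.1 == v] = pair v @: (nbhd e v :\ u).
  apply/setP=> -[x y]; rewrite !inE /=; apply/andP/imsetP => [[]|[y']].
    move=> /and3P[_ xy yu] /eqP xv; rewrite xv in xy *.
    by exists y; rewrite // !inE yu.
  by rewrite !inE => /andP[y'u vy'] [-> ->]; rewrite uv vy' y'u.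
rewrite card_imset; last by move=> y y' [].
have := cardsD1 u (nbhd e v); rewrite e_regular inE e_sym uv add1n => ->.
by rewrite subn1.
Qed.

Lemma card_two_arcs_from u : #|two_arcs_from u| = k * (k - 1).
Proof.
rewrite -{1}(e_regular u); apply: (card_uniform_fibres (f := fst)).
  exact: two_arc_start_nbhd.
exact: card_two_arcs_fibre_start.
Qed.

Hypothesis e_c2 : has_c2 e c2.

Lemma card_two_arcs_fibre_end u w :
  w \in nbhd2 e u -> #|[set p in two_arcs_from u | p.2 == w]| = c2.
Proof.
move=> u2w; rewrite -(e_c2 u2w).
have -> : [set p in two_arcs_from u | p.2 == w] =
          (fun x => (x, w)) @: (nbhd e u :&: nbhd e w).
  apply/setP=> -[x y]; rewrite !inE /=; apply/andP/imsetP => [[]|[x']].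
    move=> /and3P[ux xy _] /eqP yw; rewrite yw in xy *.
    by exists x; rewrite // !inE ux e_sym.
  move: u2w; rewrite !inE => /andP[wu _] /andP[ux' wx'] [-> ->].
  by rewrite ux' e_sym wx' wu.
by rewrite card_imset // => x x' [].
Qed.

Lemma card_two_arcs_from_c2 u : #|two_arcs_from u| = #|nbhd2 e u| * c2.
Proof.
apply: (card_uniform_fibres (f := snd)).
  exact: two_arc_end_nbhd2.
exact: card_two_arcs_fibre_end.
Qed.

Hypotheses (k_gt0 : 0 < k) (c2_coprime : coprime c2 (k - 1)).
Hypothesis stab_trans : forall u,
  stab_transitive_on G u (nbhd e u) /\ stab_transitive_on G u (nbhd2 e u).

Lemma stab_orbit_fibre_start_dvdn u p :
  p \in two_arcs_from u ->
  k - 1 %| #|[set q in orbit pair_action 'C_G[u | 'P] p | q.1 == p.1]|.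
Proof.
move=> arc_p; set O := orbit _ _ p.
have actsO : [acts 'C_G[u | 'P], on O | pair_action] by exact/acts_orbit/subsetT.
have arcsO : {subset O <= two_arcs_from u}.
  by apply/subsetP; rewrite acts_sub_orbit ?acts_stab_two_arcs_from.
have countO_start : #|O| = #|nbhd e u| * #|[set q in O | q.1 == p.1]|.
  apply: (card_acts_uniform_fibres (toR := 'P) _ actsO) => //.
  - by move=> q /arcsO/two_arc_start_nbhd.
  - exact: stab_transitive_orbit (stab_trans u).1.
  - exact: two_arc_start_nbhd.
have countO_end : #|O| = #|nbhd2 e u| * #|[set q in O | q.2 == p.2]|.
  apply: (card_acts_uniform_fibres (toR := 'P) _ actsO) => //.
  - by move=> q /arcsO/two_arc_end_nbhd2.
  - exact: stab_transitive_orbit (stab_trans u).2.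
  - exact: two_arc_end_nbhd2.
set m := #|[set q in O | q.1 == p.1]| in countO_start *.
set n := #|[set q in O | q.2 == p.2]| in countO_end.
have ratio : m * c2 = n * (k - 1).
  apply/eqP; rewrite -(eqn_pmul2l k_gt0) mulnA -{1}(e_regular u) -countO_start.
  rewrite countO_end mulnAC -card_two_arcs_from_c2 card_two_arcs_from.
  by rewrite -mulnA (mulnC (k - 1)).
by rewrite -(@Gauss_dvdl _ _ c2) 1?coprime_sym // ratio dvdn_mull.
Qed.

Lemma stab_orbit_two_arcs_from u p :
  p \in two_arcs_from u -> orbit pair_action 'C_G[u | 'P] p = two_arcs_from u.
Proof.
move=> arc_p; set O := orbit _ _ p.
have sub_O : O \subset two_arcs_from u.
  by rewrite acts_sub_orbit ?acts_stab_two_arcs_from.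
have sub_fibre :
    [set q in O | q.1 == p.1] \subset [set q in two_arcs_from u | q.1 == p.1].
  by apply/subsetP=> q /setIdP[Oq q1]; rewrite inE (subsetP sub_O) ?q1.
(* a nonempty multiple of k - 1 inside a set of size k - 1 *)
have fibre_O : [set q in O | q.1 == p.1] = [set q in two_arcs_from u | q.1 == p.1].
  apply/eqP; rewrite eqEcard sub_fibre.
  rewrite card_two_arcs_fibre_start ?two_arc_start_nbhd //.
  apply: dvdn_leq (stab_orbit_fibre_start_dvdn arc_p).
  by apply/card_gt0P; exists p; rewrite inE orbit_refl eqxx.
apply/eqP; rewrite eqEsubset sub_O; apply/subsetP=> q arc_q.
have/orbitP[h Hh /= hq1] := stab_transitive_orbit (stab_trans u).1
  (two_arc_start_nbhd arc_q) (two_arc_start_nbhd arc_p).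
rewrite apermE in hq1.
have : pair_act q h \in [set q in two_arcs_from u | q.1 == p.1].
  case/setIP: (Hh) => Gh /astab1P /= hu.
  by rewrite inE /= hq1 eqxx andbT -{1}hu two_arcs_from_act.
by rewrite -fibre_O => /setIdP[Oqh _]; rewrite -(orbit_actr _ _ _ Hh).
Qed.

End TwoArcs.

Theorem lemma5p7 (V : finType) (e : rel V) (G : {group {perm V}}) (k c2 : nat) :
  simple_graph e -> connected_graph e ->
  G2_distance_transitive e G ->
  regular e k -> 2 <= k ->
  has_c2 e c2 -> coprime c2 (k - 1) ->
  girth3 e \/ G2_arc_transitive e G.
Proof.
move=> [e_sym _] _ [autG _ vtG stab_trans] e_regular k_ge2 e_c2 c2_coprime.
have [triangle | no_triangle] := girth3P e; [by left | right].
have k_gt0 : 0 < k by apply: leq_trans k_ge2.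
split=> // -[[a0 a1] a2] [[b0 b1] b2] /and3P[a01 a12 a20] /and3P[b01 b12 b20].
have [g Gg ga0] := vtG a0 b0.
have arc_ga : pair_act (a1, a2) g \in two_arcs_from e b0.
  by rewrite -ga0 (two_arcs_from_act autG) // inE a01 a12 eq_sym.
have arc_b : (b1, b2) \in two_arcs_from e b0 by rewrite inE b01 b12 eq_sym.
move: arc_b; rewrite -(stab_orbit_two_arcs_from e_sym autG no_triangle e_regular
  e_c2 k_gt0 c2_coprime stab_trans arc_ga).
case/orbitP=> h /setIP[Gh /astab1P /= hb0] [hga1 hga2].
by exists (g * h)%g; rewrite ?groupM // !permM ga0.
Qed.
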